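(* Let $V,W$ be finite-dimensional Hermitian vector spaces, $\tilde W=V\oplus V\oplus W$, and $B_1,B_2\in\mathrm{End}(V)$, $i\in\mathrm{Hom}(W,V)$, $j\in\mathrm{Hom}(V,W)$. Define right $\mathfrak{M}^{\rm I}_q$-linear maps $\alpha_{\rm I}:V\otimes\mathfrak{M}^{\rm I}_q\to\tilde W\otimes\mathfrak{M}^{\rm I}_q$, $\beta_{\rm I}:\tilde W\otimes\mathfrak{M}^{\rm I}_q\to V\otimes\mathfrak{M}^{\rm I}_q$ by $$\alpha_{\rm I}=\begin{pmatrix}B_1\otimes 1-1\otimes x_{21'}\\ B_2\otimes1-1\otimes x_{22'}\\ j\otimes 1\end{pmatrix},\qquad \beta_{\rm I}=\begin{pmatrix}-B_2\otimes1+1\otimes x_{22'} & B_1\otimes1-1\otimes x_{21'} & i\otimes1\end{pmatrix},$$ and their adjoints $$\beta_{\rm I}^\dagger=\begin{pmatrix}-B_2^\dagger\otimes1+1\otimes x_{11'}\\ B_1^\dagger\otimes1+1\otimes x_{12'}\\ i^\dagger\otimes1\end{pmatrix},\qquad \alpha_{\rm I}^\dagger=\begin{pmatrix}B_1^\dagger\otimes1+1\otimes x_{12'} & B_2^\dagger\otimes1-1\otimes x_{11'} & j^\dagger\otimes1\end{pmatrix}.$$ Then (1) $\beta_{\rm I}\alpha_{\rm I}=0$ if and only if $[B_1,B_2]+ij=0$; (2) $\beta_{\rm I}\beta_{\rm I}^\dagger=\alpha_{\rm I}^\dagger\alpha_{\rm I}$ if and only if $[B_1,B_1^\dagger]+[B_2,B_2^\dagger]+ii^\dagger-j^\dagger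 j=0$.
   Context: $q$ is a nonzero complex (e.g. positive real) parameter. $\mathfrak{M}^{\rm I}_q$ is the algebra generated by $x_{11'},x_{12'},x_{21'},x_{22'}$ subject to $x_{11'}x_{12'}=x_{12'}x_{11'}$, $x_{21'}x_{22'}=x_{22'}x_{21'}$, $[x_{11'},x_{22'}]+[x_{21'},x_{12'}]=0$, $x_{11'}x_{21'}=q^{-2}x_{21'}x_{11'}$, $x_{12'}x_{22'}=q^{-2}x_{22'}x_{12'}$, $x_{21'}x_{12'}=q^2x_{12'}x_{21'}$ (realized inside $\widetilde{SL}(2)_q$ as $x_{11'}=\delta g_{11'}$, $x_{12'}=q^{-1/2}\delta g_{12'}$, $x_{21'}=q^{1/2}\delta g_{21'}$, $x_{22'}=\delta g_{22'}$). For a finite-dimensional vector space $U$, $U\otimes\mathfrak{M}^{\rm I}_q$ is a free right $\mathfrak{M}^{\rm I}_q$-module; for linear maps $A:U_1\to U_2$ and $x\in\mathfrak{M}^{\rm I}_q$, $A\otimes x$ denotes the right-linear map $v\otimes f\mapsto Av\otimes xf$. Block matrices act in the obvious way, and $\dagger$ on $B_k,i,j$ is the Hermitian adjoint. *)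

From HB Require Import structures.
From mathcomp Require Import all_boot all_order all_algebra.
Set Implicit Arguments. Unset Strict Implicit. Unset Printing Implicit Defensive.
Import GRing.Theory Num.Theory.
Local Open Scope ring_scope.

(* Conventions:
   - C : the complex scalars (any numClosedFieldType; e.g. complex numbers), with
     conjugation Num.conj.
   - A finite-dimensional Hermitian space of dimension n is identified (via an
     orthonormal basis) with C^n with the standard inner product; hence linear
     maps are matrices and the Hermitian adjoint is the conjugate transpose.
   - U (x) M, for M a C-algebra, is the free right M-module M^(dim U) (column
     vectors); a right M-linear map between such modules is a matrix over M acting
     by left multiplication, and composition is the matrix product over M.
   - A (x) x  is the right-linear map v (x) f |-> A v (x) x f, i.e. the matrix
     with entries A_kl *: x. *)

Definition dag (C : numClosedFieldType) p r (A : 'M[C]_(p, r)) : 'M[C]_(r, p) :=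
  (map_mx Num.conj A)^T.

Definition tensmx (C : numClosedFieldType) (M : algType C) p r
  (A : 'M[C]_(p, r)) (x : M) : 'M[M]_(p, r) := map_mx (fun a => a *: x) A.

Definition MIq_relations (C : numClosedFieldType) (M : algType C) (q : C)
  (x11 x12 x21 x22 : M) : Prop :=
  x11 * x12 = x12 * x11 /\
  x21 * x22 = x22 * x21 /\
  (x11 * x22 - x22 * x11) + (x21 * x12 - x12 * x21) = 0 /\
  x11 * x21 = q ^- 2 *: (x21 * x11) /\
  x12 * x22 = q ^- 2 *: (x22 * x12) /\
  x21 * x12 = q ^+ 2 *: (x12 * x21).

Section Maps.
Variables (C : numClosedFieldType) (M : algType C) (n m : nat).
Variables (x11 x12 x21 x22 : M).
Variables (B1 B2 : 'M[C]_n) (i : 'M[C]_(n, m)) (j : 'M[C]_(m, n)).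

Local Notation "A \ox x" := (tensmx A x) (at level 40).

Definition alphaI : 'M[M]_(n + n + m, n) :=
  col_mx (col_mx (B1 \ox 1 - 1%:M \ox x21) (B2 \ox 1 - 1%:M \ox x22)) (j \ox 1).

Definition betaI : 'M[M]_(n, n + n + m) :=
  row_mx (row_mx (- (B2 \ox 1) + 1%:M \ox x22) (B1 \ox 1 - 1%:M \ox x21)) (i \ox 1).

Definition betaI_dag : 'M[M]_(n + n + m, n) :=
  col_mx (col_mx (- (dag B2 \ox 1) + 1%:M \ox x11) (dag B1 \ox 1 + 1%:M \ox x12))
         (dag i \ox 1).

Definition alphaI_dag : 'M[M]_(n, n + n + m) :=
  row_mx (row_mx (dag B1 \ox 1 + 1%:M \ox x12) (dag B2 \ox 1 - 1%:M \ox x11))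
         (dag j \ox 1).

End Maps.

(* With u = B1 (x) 1 - 1 (x) x21, v = B2 (x) 1 - 1 (x) x22 and u', v' the
   matching entries of the adjoints, beta = (-v, u, i) and alpha = (u, v, j), so
   beta alpha = [u, v] + ij (x) 1 and
   beta beta^dag - alpha^dag alpha = [u, u'] + [v, v'] + (ii^dag - j^dag j) (x) 1.
   As A (x) 1 commutes with 1 (x) x, the bracket splits as
   [A (x) 1 + 1 (x) x, B (x) 1 + 1 (x) y] = [A, B] (x) 1 + 1 (x) [x, y], and the
   algebra parts vanish by x21 x22 = x22 x21 and [x11, x22] + [x21, x12] = 0.  Finally A (x) 1 = 0 forces
   A = 0 because 1 != 0 in M. *)

From HB Require Import structures.
From mathcomp Require Import all_boot all_order all_algebra.

Set Implicit Arguments. Unset Strict Implicit. Unset Printing Implicit Defensive.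
Import GRing.Theory Num.Theory.
Local Open Scope ring_scope.

Local Notation "A \ox x" := (tensmx A x) (at level 35).

Definition mxbracket (R : pzRingType) n (A B : 'M[R]_n) : 'M[R]_n := A *m B - B *m A.

Section TensorMatrices.
Variables (C : numClosedFieldType) (M : algType C).

Lemma tensmx_mul p r s (A : 'M[C]_(p, r)) (B : 'M[C]_(r, s)) (x y : M) :
  A \ox x *m B \ox y = (A *m B) \ox (x * y).
Proof.
apply/matrixP=> a b; rewrite !mxE scaler_suml; apply: eq_bigr => k _.
by rewrite !mxE -scalerAl -scalerAr scalerA.
Qed.

Lemma tensmxDl p r (A B : 'M[C]_(p, r)) (x : M) : (A + B) \ox x = A \ox x + B \ox x.
Proof. by apply/matrixP=> a b; rewrite !mxE scalerDl. Qed.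

Lemma tensmxNl p r (A : 'M[C]_(p, r)) (x : M) : (- A) \ox x = - (A \ox x).
Proof. by apply/matrixP=> a b; rewrite !mxE scaleNr. Qed.

Lemma tensmxBl p r (A B : 'M[C]_(p, r)) (x : M) : (A - B) \ox x = A \ox x - B \ox x.
Proof. by rewrite tensmxDl tensmxNl. Qed.

Lemma tensmxDr p r (A : 'M[C]_(p, r)) (x y : M) : A \ox (x + y) = A \ox x + A \ox y.
Proof. by apply/matrixP=> a b; rewrite !mxE scalerDr. Qed.

Lemma tensmxNr p r (A : 'M[C]_(p, r)) (x : M) : A \ox (- x) = - (A \ox x).
Proof. by apply/matrixP=> a b; rewrite !mxE scalerN. Qed.

Lemma tensmx0r p r (A : 'M[C]_(p, r)) : A \ox (0 : M) = 0.
Proof. by apply/matrixP=> a b; rewrite !mxE scaler0. Qed.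

Lemma tensmx0l p r (x : M) : (0 : 'M[C]_(p, r)) \ox x = 0.
Proof. by apply/matrixP=> a b; rewrite !mxE scale0r. Qed.

Lemma tensmx1_eq0 p r (A : 'M[C]_(p, r)) : A \ox (1 : M) = 0 <-> A = 0.
Proof.
split=> [/matrixP A1_0 | ->]; last exact: tensmx0l.
apply/matrixP=> a b; move: (A1_0 a b); rewrite !mxE => /eqP.
by rewrite scaler_eq0 oner_eq0 orbF => /eqP.
Qed.

Lemma mxbracket_tensD n (A B : 'M[C]_n) (x y : M) :
  mxbracket (A \ox 1 + 1%:M \ox x) (B \ox 1 + 1%:M \ox y)
  = mxbracket A B \ox 1 + 1%:M \ox (x * y - y * x).
Proof.
rewrite /mxbracket !mulmxDl !mulmxDr !tensmx_mul !mul1mx !mulmx1 !mul1r !mulr1.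
rewrite tensmxBl tensmxDr tensmxNr.
rewrite [(B *m A) \ox 1 + _ + _]addrACA opprD addrACA.
by rewrite [(B *m A) \ox 1 + _]addrC addrKA [B \ox x + _]addrC addrKA.
Qed.

End TensorMatrices.

Section MonadMaps.
Variables (C : numClosedFieldType) (M : algType C) (n m : nat).
Variables (x11 x12 x21 x22 : M).
Variables (B1 B2 : 'M[C]_n) (i : 'M[C]_(n, m)) (j : 'M[C]_(m, n)).

Lemma betaI_alphaI : x21 * x22 = x22 * x21 ->
  betaI x21 x22 B1 B2 i *m alphaI x21 x22 B1 B2 j = (mxbracket B1 B2 + i *m j) \ox 1.
Proof.
move=> x2C; rewrite /betaI /alphaI !mul_row_col.
set u := B1 \ox 1 - 1%:M \ox x21; set v := B2 \ox 1 - 1%:M \ox x22.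
have -> : - (B2 \ox 1) + 1%:M \ox x22 = - v by rewrite opprB addrC.
rewrite mulNmx [- _ + _]addrC -[u *m v - _]/(mxbracket u v) /u /v -!tensmxNr.
by rewrite mxbracket_tensD !mulrNN x2C subrr tensmx0r addr0 tensmx_mul mulr1 -tensmxDl.
Qed.

Lemma betaI_betaI_dag_sub :
  x11 * x22 - x22 * x11 + (x21 * x12 - x12 * x21) = 0 ->
  betaI x21 x22 B1 B2 i *m betaI_dag x11 x12 B1 B2 i
    - alphaI_dag x11 x12 B1 B2 j *m alphaI x21 x22 B1 B2 j
  = (mxbracket B1 (dag B1) + mxbracket B2 (dag B2) + i *m dag i - dag j *m j) \ox 1.
Proof.
move=> xrel; rewrite /betaI /alphaI /betaI_dag /alphaI_dag !mul_row_col.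
set u := B1 \ox 1 - 1%:M \ox x21; set v := B2 \ox 1 - 1%:M \ox x22.
set u' := dag B1 \ox 1 + 1%:M \ox x12; set v' := dag B2 \ox 1 - 1%:M \ox x11.
have -> : - (B2 \ox 1) + 1%:M \ox x22 = - v by rewrite opprB addrC.
have -> : - (dag B2 \ox 1) + 1%:M \ox x11 = - v' by rewrite opprB addrC.
rewrite mulNmx mulmxN opprK [v *m v' + _]addrC opprD addrACA.
rewrite opprD [u *m u' + _ + _]addrACA.
rewrite -[u *m u' - _]/(mxbracket u u') -[v *m v' - _]/(mxbracket v v').
rewrite /u /v /u' /v' -!tensmxNr !mxbracket_tensD !tensmx_mul !mulr1.
rewrite [mxbracket B1 _ \ox 1 + _ + _]addrACA -tensmxDr.
have -> : - x21 * x12 - x12 * - x21 + (- x22 * - x11 - - x11 * - x22) = 0.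
  rewrite mulNr mulrN opprK !mulrNN -oppr0 -xrel opprD !opprB.
  by rewrite addrC [- _ + _]addrC.
by rewrite tensmx0r addr0 -tensmxBl -!tensmxDl addrA.
Qed.
End MonadMaps.

Theorem proposition3p8 (C : numClosedFieldType) (q : C) (hq : q != 0)
  (M : algType C) (x11 x12 x21 x22 : M)
  (hrel : MIq_relations q x11 x12 x21 x22)
  (n m : nat) (B1 B2 : 'M[C]_n) (i : 'M[C]_(n, m)) (j : 'M[C]_(m, n)) :
  (betaI x21 x22 B1 B2 i *m alphaI x21 x22 B1 B2 j = 0
     <-> B1 *m B2 - B2 *m B1 + i *m j = 0)
  /\
  (betaI x21 x22 B1 B2 i *m betaI_dag x11 x12 B1 B2 i
     = alphaI_dag x11 x12 B1 B2 j *m alphaI x21 x22 B1 B2 j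
     <-> (B1 *m dag B1 - dag B1 *m B1) + (B2 *m dag B2 - dag B2 *m B2)
           + i *m dag i - dag j *m j = 0).
Proof.
case: hrel => _ [x2C [xrel _]]; split.
  by rewrite betaI_alphaI //; apply: tensmx1_eq0.
have diffK := betaI_betaI_dag_sub B1 B2 i j xrel.
split=> [betaI2_eq | K0].
  by move: diffK; rewrite betaI2_eq subrr => /esym /tensmx1_eq0.
by apply/subr0_eq; rewrite diffK K0 tensmx0l.
Qed.
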